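(* Let $A$ be a finite set of options (with at least two elements) and let $v=(v_{xy})$ be a Llull matrix on $A$. Let $v^*$ be the associated path scores, $\succeq$ the ranking relation and $T$ the set of path-top choices (as defined in the context). Then $T$ is the unique minimal dominant set for $v^*$; that is, $T$ is a dominant set for $v^*$, no proper subset of $T$ is a dominant set for $v^*$, and every minimal dominant set for $v^*$ equals $T$.
   Context: A Llull matrix on a finite set $A$ is a family of real numbers $v_{xy}\in[0,1]$, indexed by ordered pairs $(x,y)$ of distinct elements of $A$, with $v_{xy}+v_{yx}\le 1$. The path scores are defined by $v^*_{xy}=\max \min(v_{x_0x_1},v_{x_1x_2},\dots,v_{x_{m-1}x_m})$, where the maximum runs over all paths $x_0x_1\dots x_m$ with $m\ge1$, $x_0=x$, $x_m=y$ and the $x_i$ pairwise distinct. The ranking relation $\succeq$ is the transitive closure of the relation $\{(x,y): x\ne y,\ v^*_{xy}\ge v^*_{yx}\}$; i.e. $x\succeq y$ iff there is a path $x_0\dots x_m$ from $x$ to $y$ with $v^*_{x_ix_{i+1}}\ge v^*_{x_{i+1}x_i}$ for all $i<m$. An option $x$ is a path-top choice if $x\succeq y$ for every $y\ne x$; $T$ denotes the set of path-top choices. A set $X\subseteq A$ is a dominant set for $v^*$ if it is nonempty and $v^*_{xy}>v^*_{yx}$ for all $x\in X$ and $y\notin X$; it is a minimal dominant set if it is dominant and no proper subset of it is dominant. *)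

From HB Require Import structures.
From mathcomp Require Import all_boot all_order all_algebra.
Set Implicit Arguments. Unset Strict Implicit. Unset Printing Implicit Defensive.
Import Order.TTheory GRing.Theory Num.Theory.
Local Open Scope ring_scope.

Section Llull.
Variables (R : realFieldType) (A : finType).

Definition llull (v : A -> A -> R) : Prop :=
  forall x y : A, x != y -> [/\ 0 <= v x y, v x y <= 1 & v x y + v y x <= 1].

Definition path_min (v : A -> A -> R) (s : seq A) : R :=
  \big[Num.min/1]_(e <- zip s (behead s)) v e.1 e.2.

(* v*_{xy}: max over simple paths x = x_0 ... x_m = y, m >= 1, pairwise
   distinct vertices; a path with m edges is an (m.+1)-tuple, m = k.+1. *)
Definition vstar (v : A -> A -> R) (x y : A) : R :=
  \big[Num.max/0]_(k < #|A|)
     \big[Num.max/0]_(t : k.+2.-tuple A |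
         [&& uniq t, thead t == x & last x t == y]) path_min v t.

Definition base_rel (v : A -> A -> R) : rel A :=
  fun x y => (x != y) && (vstar v y x <= vstar v x y).

(* ranking relation: transitive closure (paths with m >= 1 steps) *)
Definition succeq (v : A -> A -> R) (x y : A) : bool :=
  [exists z, base_rel v x z && connect (base_rel v) z y].

Definition path_top (v : A -> A -> R) : {set A} :=
  [set x | [forall y, (y != x) ==> succeq v x y]].

Definition dominant (v : A -> A -> R) (X : {set A}) : Prop :=
  X != set0 /\
  forall x y, x \in X -> y \notin X -> vstar v y x < vstar v x y.

Definition minimal_dominant (v : A -> A -> R) (X : {set A}) : Prop :=
  dominant v X /\ forall Y : {set A}, Y \proper X -> ~ dominant v Y.

End Llull.

From HB Require Import structures.
From mathcomp Require Import all_boot all_order all_algebra.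
Import Order.TTheory GRing.Theory Num.Theory.
Local Open Scope ring_scope.

(* Since scores are totally ordered, the base relation is complete, so some
   option reaches every other one (take one with a largest reach set), and the
   path-top choices are exactly the options reaching everything.  A dominant
   set is closed under predecessors of the base relation, so it contains every
   option reaching one of its elements, in particular every path-top choice;
   conversely the path-top set is itself closed under predecessors, which by
   completeness is exactly dominance.  So it is the least dominant set. *)

Section CompleteRelation.
Variables (T : finType) (e : rel T).

Lemma connect_pred_closed (X : {set T}) x y :
  (forall a b, e a b -> b \in X -> a \in X) ->
  connect e x y -> y \in X -> x \in X.
Proof.
move=> closedX /connectP[p]; elim: p x => [|z p IHp] x /=; first by move=> _ ->.
by case/andP=> exz pz yz yX; apply: closedX exz (IHp z pz yz yX).
Qed.

Hypothesis e_complete : forall x y, x != y -> e x y || e y x.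

Lemma complete_connect_source :
  (0 < #|T|)%N -> exists x, forall y, connect e x y.
Proof.
case/card_gt0P=> x0 _; pose reach x := [set z | connect e x z].
have [x _ maxx] := @arg_maxnP T x0 predT (fun x => #|reach x|) isT.
exists x => y; apply: contraT => xNy.
have eyx : e y x.
  have : x != y by apply: contraNneq xNy => ->.
  by move/e_complete; rewrite (negbTE (contraNN (@connect1 _ e x y) xNy)).
have : reach x \proper reach y.
  apply/properP; split.
    by apply/subsetP=> z; rewrite !inE; apply: connect_trans (connect1 eyx).
  by exists y; rewrite !inE ?connect0.
by move/proper_card; rewrite ltnNge; have /= -> := maxx y isT.
Qed.

End CompleteRelation.

Section PathTop.
Variables (R : realFieldType) (A : finType) (v : A -> A -> R).

Lemma base_rel_complete x y : x != y -> base_rel v x y || base_rel v y x.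
Proof. by rewrite /base_rel eq_sym => ->; apply: le_total. Qed.

Lemma succeq_connect x y : x != y -> succeq v x y = connect (base_rel v) x y.
Proof.
move=> xNy; apply/existsP/idP=> [[z /andP[exz czy]]|/connectP[[|z p]] /=].
- exact: connect_trans (connect1 exz) czy.
- by move=> _ eq_yx; rewrite eq_yx eqxx in xNy.
- by case/andP=> exz pz yz; exists z; rewrite exz; apply/connectP; exists p.
Qed.

Lemma path_topE : path_top v = [set x | [forall y, connect (base_rel v) x y]].
Proof.
apply/setP=> x; rewrite !inE; apply/forallP/forallP=> topx y.
- have [->|yNx] := eqVneq y x; first exact: connect0.
  by rewrite -succeq_connect 1?eq_sym // (implyP (topx y)).
- by apply/implyP=> yNx; rewrite succeq_connect 1?eq_sym.
Qed.

Lemma path_top_neq0 : (0 < #|A|)%N -> path_top v != set0.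
Proof.
move/(@complete_connect_source _ _ base_rel_complete)=> [x sourcex].
by apply/set0Pn; exists x; rewrite path_topE inE; apply/forallP.
Qed.

Lemma dominant_pred_closed (X : {set A}) a b :
  dominant v X -> base_rel v a b -> b \in X -> a \in X.
Proof.
case=> _ domX /andP[_ le_ba] bX; apply: contraT => aNX.
by have := domX _ _ bX aNX; rewrite ltNge le_ba.
Qed.

Lemma path_top_pred_closed a b :
  base_rel v a b -> b \in path_top v -> a \in path_top v.
Proof.
rewrite !path_topE !inE => eab /forallP topb.
by apply/forallP=> y; apply: connect_trans (connect1 eab) (topb y).
Qed.

Lemma dominant_path_top : (0 < #|A|)%N -> dominant v (path_top v).
Proof.
move/path_top_neq0=> topN0; split=> // x y topx topNy; rewrite ltNge.
have yNx : y != x by apply: contraNneq topNy => ->.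
apply: contra topNy => le_xy; apply: path_top_pred_closed topx.
by rewrite /base_rel yNx le_xy.
Qed.

Lemma path_top_sub_dominant (X : {set A}) :
  dominant v X -> path_top v \subset X.
Proof.
move=> domX; have [/set0Pn[x xX] _] := domX.
apply/subsetP=> t; rewrite path_topE inE => /forallP/(_ x) ctx.
apply: connect_pred_closed ctx xX => a b; exact: dominant_pred_closed.
Qed.

End PathTop.

Theorem theorem2p2 (R : realFieldType) (A : finType) (v : A -> A -> R) :
  (2 <= #|A|)%N -> llull v ->
  [/\ dominant v (path_top v),
      (forall Y : {set A}, Y \proper path_top v -> ~ dominant v Y)
    & (forall X : {set A}, minimal_dominant v X -> X = path_top v)].
Proof.
move=> /ltnW A_gt0 _.
have domT := @dominant_path_top R A v A_gt0.
have T_sub X := @path_top_sub_dominant R A v X.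
split=> // [Y properY domY|X [domX minX]].
  by have := proper_sub_trans properY (T_sub Y domY); rewrite properxx.
have [//|properT] := eqVproper (T_sub X domX).
by case: (minX _ properT domT).
Qed.
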